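(* Let $\Sigma$ be a finite alphabet with $|\Sigma|\ge2$, $n\ge1$, and $\rho_1,\rho_2,\rho_3>0$ with $\rho_1+\rho_2+\rho_3\le1$. For $0<\varepsilon<1$, the $\varepsilon$-mixing time $\tau(\varepsilon)$ of the lazy Markov chain $L^{\mathfrak{A}(n)}_{\rho_1,\rho_2,\rho_3}$ satisfies $$\tau(\varepsilon)\le\max\left(\left\lceil\frac{n}{\rho_1}\Big(\log n+\log\frac{1}{\rho_1\varepsilon}\Big)\right\rceil,\ \left\lceil\frac{n}{\rho_2}\Big(\log n+\log\frac{1}{\rho_2\varepsilon}\Big)\right\rceil,\ \left\lceil\frac{|\Sigma|n^2}{\rho_3}\Big(\log(|\Sigma|n^2)+\log\frac{1}{\rho_3\varepsilon}\Big)\right\rceil\right).$$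
   Context: A non-deterministic automaton (NFA) over $\Sigma$ is a tuple $(Q,\Sigma,\Delta,I,F)$ with $Q$ a finite set of states, $\Delta\subseteq Q\times\Sigma\times Q$, $I,F\subseteq Q$. $\mathfrak{A}(n)$ is the set of all NFAs over $\Sigma$ with state set $Q=\{1,\dots,n\}$. For $\mathcal{A}\in\mathfrak{A}(n)$: $\mathsf{Ch_{init}}(\mathcal{A},q)$ toggles membership of $q$ in $I$; $\mathsf{Ch_{final}}(\mathcal{A},q)$ toggles membership of $q$ in $F$; $\mathsf{Ch_{trans}}(\mathcal{A},(p,a,q))$ toggles membership of $(p,a,q)$ in $\Delta$. The matrix $S=S^{\mathfrak{A}(n)}_{\rho_1,\rho_2,\rho_3}$ on $\mathfrak{A}(n)$ is: for $x\ne y$, $S(x,y)=\rho_1/n$ if $y=\mathsf{Ch_{init}}(x,q)$ for some $q$; $\rho_2/n$ if $y=\mathsf{Ch_{final}}(x,q)$ for some $q$; $\rho_3/(|\Sigma|n^2)$ if $y=\mathsf{Ch_{trans}}(x,(p,a,q))$ for some $(p,a,q)$; $0$ otherwise; and $S(x,x)=1-\sum_{y\ne x}S(x,y)$. The lazy chain $L=L^{\mathfrak{A}(n)}_{\rho_1,\rho_2,\rho_3}$ is $L(x,y)=\frac12 S(x,y)$ for $x\ne y$ and $L(x,x)=\frac12+\frac12S(x,x)$; its stationary distribution $\pi$ is uniform on $\mathfrak{A}(n)$. The $\varepsilon$-mixing time is $\tau(\varepsilon)=\min\{t:\max_{x\in\mathfrak{A}(n)}\|L^t(x,\cdot)-\pi\|_{TV}\le\varepsilon\}$,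 where $\|\cdot\|_{TV}$ is total variation distance. $\log$ denotes the natural logarithm. *)

From HB Require Import structures.
From mathcomp Require Import all_boot all_order all_algebra.
From mathcomp Require Import reals exp.
Set Implicit Arguments. Unset Strict Implicit. Unset Printing Implicit Defensive.
Import Order.TTheory GRing.Theory Num.Theory.
Local Open Scope ring_scope.

(* An NFA with state set Q = 'I_n (representing {1,...,n}) over alphabet Sigma
   is the triple (I, F, Delta). *)
Definition nfa (Sigma : finType) (n : nat) : finType :=
  ({set 'I_n} * {set 'I_n} * {set ('I_n * Sigma * 'I_n)})%type.

Definition nfa_init {Sigma : finType} {n : nat} (A : nfa Sigma n) : {set 'I_n} := A.1.1.
Definition nfa_final {Sigma : finType} {n : nat} (A : nfa Sigma n) : {set 'I_n} := A.1.2.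
Definition nfa_trans {Sigma : finType} {n : nat} (A : nfa Sigma n)
  : {set ('I_n * Sigma * 'I_n)} := A.2.

Definition toggle {T : finType} (X : {set T}) (x : T) : {set T} :=
  if x \in X then X :\ x else x |: X.

Definition Ch_init {Sigma : finType} {n : nat} (A : nfa Sigma n) (q : 'I_n) : nfa Sigma n :=
  (toggle (nfa_init A) q, nfa_final A, nfa_trans A).
Definition Ch_final {Sigma : finType} {n : nat} (A : nfa Sigma n) (q : 'I_n) : nfa Sigma n :=
  (nfa_init A, toggle (nfa_final A) q, nfa_trans A).
Definition Ch_trans {Sigma : finType} {n : nat} (A : nfa Sigma n)
  (e : 'I_n * Sigma * 'I_n) : nfa Sigma n :=
  (nfa_init A, nfa_final A, toggle (nfa_trans A) e).

Section Chain.
Variables (R : realType) (Sigma : finType) (n : nat) (rho1 rho2 rho3 : R).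
Local Notation A := (nfa Sigma n).

Definition S_off (x y : A) : R :=
  if [exists q, y == Ch_init x q] then rho1 / n%:R
  else if [exists q, y == Ch_final x q] then rho2 / n%:R
  else if [exists e, y == Ch_trans x e] then rho3 / (#|Sigma|%:R * n%:R ^+ 2)
  else 0.

Definition S_mat (x y : A) : R :=
  if x == y then 1 - \sum_(z : A | z != x) S_off x z else S_off x y.

Definition L_mat (x y : A) : R :=
  if x == y then 1/2 + 1/2 * S_mat x x else 1/2 * S_mat x y.

Fixpoint L_pow (t : nat) (x y : A) : R :=
  match t with
  | 0%N => (x == y)%:R
  | t'.+1 => \sum_(z : A) L_pow t' x z * L_mat z y
  end.

Definition pi_unif (y : A) : R := 1 / #|A|%:R.

Definition tv_dist (mu nu : A -> R) : R := 1/2 * \sum_(y : A) `|mu y - nu y|.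

Definition mixing_cond (eps : R) (t : nat) : bool :=
  \big[Num.max/0]_(x : A) tv_dist (L_pow t x) pi_unif <= eps.

End Chain.

From HB Require Import structures.
From mathcomp Require Import all_boot all_order all_algebra.
From mathcomp Require Import reals exp sequences.
From mathcomp Require Import ring lra.
Set Implicit Arguments. Unset Strict Implicit. Unset Printing Implicit Defensive.
Import Order.TTheory GRing.Theory Num.Theory.
Local Open Scope ring_scope.

(* An NFA over [Sigma] with [n] states is a vector of bits indexed by [2 n + |Sigma| n^2]
   coordinates, and the lazy chain flips coordinate [c] with probability [p_c / 2], where
   [p_c] is [rho1 / n], [rho2 / n] or [rho3 / (|Sigma| n^2)]. Flipping [c] with probability
   [p_c / 2] is the same as resampling it uniformly with probability [p_c], so [L^t(x, .)]
   is a mixture, over the set [U] of coordinates resampled so far, of the law of [x] with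
   the bits in [U] made uniform. Hence its distance to the uniform law is at most the
   probability that some coordinate was never resampled, at most [sum_c (1 - p_c)^t].
   Since [(1 - a)^t <= exp (- a t)], each of the three families of coordinates contributes
   at most [rho_i eps] once [t] exceeds the corresponding term of the bound. *)

Lemma in_toggle (T : finType) (X : {set T}) x y :
  (y \in toggle X x) = (if y == x then x \notin X else y \in X).
Proof.
rewrite /toggle; case: (boolP (x \in X)) => xX; rewrite !inE;
by case: eqP => [->|] //=; rewrite ?xX ?eqxx.
Qed.

Lemma sum_indicatorM (R : pzSemiRingType) (T : finType) (a : T) (f : T -> R) :
  \sum_y (y == a)%:R * f y = f a.
Proof.
rewrite (bigD1 a) //= eqxx mul1r big1 ?addr0 // => y /negbTE ->.
by rewrite mul0r.
Qed.

Lemma sum_indicator_in (R : pzSemiRingType) (T : finType) (P : pred T) (a : T) :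
  \sum_(y | P y) (y == a)%:R = (P a)%:R :> R.
Proof.
rewrite big_mkcond (bigD1 a) //= eqxx big1 ?addr0; first by case: (P a).
by move=> y /negbTE ->; case: (P y).
Qed.

Lemma sum_indicator (R : pzSemiRingType) (T : finType) (a : T) : \sum_y (y == a)%:R = 1 :> R.
Proof. exact: sum_indicator_in. Qed.

Lemma neq_setT_le_sum_notin (R : numDomainType) (T : finType) (U : {set T}) :
  (U != setT)%:R <= \sum_c (c \notin U)%:R :> R.
Proof.
case: (pickP [pred c | c \notin U]) => [c /= cU|noneU].
  rewrite (bigD1 c) //= cU -[leLHS]addr0 lerD ?ler_nat ?leq_b1 //.
  by rewrite sumr_ge0.
have -> : U = setT by apply/setP => c; rewrite inE; apply/negbFE/noneU.
by rewrite eqxx sumr_ge0.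
Qed.

Section Coordinates.
Variables (Sigma : finType) (n : nat).
Local Notation nfa := (nfa Sigma n).

Definition nfa_coord : finType := (('I_n + 'I_n) + ('I_n * Sigma * 'I_n))%type.

Definition nfa_bit (z : nfa) (c : nfa_coord) : bool :=
  match c with
  | inl (inl q) => q \in nfa_init z
  | inl (inr q) => q \in nfa_final z
  | inr e => e \in nfa_trans z
  end.

Definition nfa_flip (z : nfa) (c : nfa_coord) : nfa :=
  match c with
  | inl (inl q) => Ch_init z q
  | inl (inr q) => Ch_final z q
  | inr e => Ch_trans z e
  end.

Lemma nfa_bit_flip z c d :
  nfa_bit (nfa_flip z c) d = if d == c then ~~ nfa_bit z c else nfa_bit z d.
Proof. by case: c => [[q|q]|e]; case: d => [[q'|q']|e'] //=; rewrite in_toggle. Qed.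

Lemma nfa_bit_inj y z : nfa_bit y =1 nfa_bit z -> y = z.
Proof.
case: y => [[I1 F1] D1]; case: z => [[I2 F2] D2] eq_bit.
have -> : I1 = I2 by apply/setP => q; exact: (eq_bit (inl (inl q))).
have -> : F1 = F2 by apply/setP => q; exact: (eq_bit (inl (inr q))).
have -> : D1 = D2 by apply/setP => e; exact: (eq_bit (inr e)).
by [].
Qed.

Lemma nfa_flipK c : involutive (nfa_flip^~ c).
Proof.
move=> z; apply: nfa_bit_inj => d; rewrite !nfa_bit_flip eqxx.
by case: eqP => [->|]; rewrite ?negbK.
Qed.

Lemma nfa_flip_inj z : injective (nfa_flip z).
Proof.
move=> c d eq_flip; apply/eqP; apply: contraT => neq_cd.
have := nfa_bit_flip z c c; rewrite eq_flip nfa_bit_flip eqxx (negbTE neq_cd).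
by case: (nfa_bit z c).
Qed.

Lemma nfa_flip_neq z c : nfa_flip z c != z.
Proof.
apply/eqP => eq_flip; have := nfa_bit_flip z c c; rewrite eq_flip eqxx.
by case: (nfa_bit z c).
Qed.

Lemma eq_nfa_flip_sym y z c : (y == nfa_flip z c) = (z == nfa_flip y c).
Proof. by apply/eqP/eqP => [->|->]; rewrite nfa_flipK. Qed.

Lemma sum_nfa_coord (R : pzSemiRingType) (F : nfa_coord -> R) (f1 f2 f3 : R) :
  (forall q, F (inl (inl q)) = f1) -> (forall q, F (inl (inr q)) = f2) ->
  (forall e, F (inr e) = f3) ->
  \sum_c F c = n%:R * f1 + n%:R * f2 + (#|Sigma|%:R * n%:R ^+ 2) * f3.
Proof.
move=> F1 F2 F3; rewrite !big_sumType /=.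
rewrite (eq_bigr _ (fun q _ => F1 q)) (eq_bigr _ (fun q _ => F2 q)).
rewrite (eq_bigr _ (fun e _ => F3 e)) !sumr_const !card_prod !card_ord.
rewrite -[f1 *+ _]mulr_natl -[f2 *+ _]mulr_natl -[f3 *+ _]mulr_natl.
by rewrite -natrX -natrM mulnA [(n * _)%N]mulnC.
Qed.

End Coordinates.

Section RefreshCoupling.
Variables (R : realType) (Sigma : finType) (n : nat).
Variable p : nfa_coord Sigma n -> R.
Local Notation nfa := (nfa Sigma n).
Local Notation coord := (nfa_coord Sigma n).
Local Notation flip := (@nfa_flip Sigma n).
Implicit Types (U V : {set coord}) (y z : nfa) (c : coord).

Definition flip_rate : R := \sum_c p c.

Definition flip_kernel (z y : nfa) : R :=
  (z == y)%:R * (1 - flip_rate / 2) + \sum_c p c / 2 * (z == flip y c)%:R.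

Variable x : nfa.

Definition agrees_off (U : {set coord}) (y : nfa) : bool :=
  [forall c, (c \notin U) ==> (nfa_bit y c == nfa_bit x c)].

Definition refresh (U : {set coord}) (y : nfa) : R :=
  (agrees_off U y)%:R / 2 ^+ #|U|.

Lemma agrees_off0 y : agrees_off set0 y = (x == y).
Proof.
apply/forallP/eqP => [agree|<- c]; last by rewrite eqxx implybT.
by apply: nfa_bit_inj => c; have := agree c; rewrite inE => /eqP.
Qed.

Lemma agrees_offT y : agrees_off setT y.
Proof. by apply/forallP => c; rewrite inE. Qed.

Lemma agrees_off_flip U y c : c \in U -> agrees_off U (flip y c) = agrees_off U y.
Proof.
move=> cU; apply: eq_forallb => d; rewrite nfa_bit_flip.
by case: (eqVneq d c) => [->|]; rewrite ?cU.
Qed.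

Lemma agrees_offU1 U y c : c \notin U ->
  agrees_off U y = agrees_off (c |: U) y && (nfa_bit y c == nfa_bit x c).
Proof.
move=> cU; apply/forallP/andP => [agree|[/forallP agree agree_c] d].
  split; last by have := agree c; rewrite cU.
  apply/forallP => d; apply/implyP; rewrite !inE negb_or => /andP [_ dU].
  by have := agree d; rewrite dU.
apply/implyP => dU; case: (eqVneq d c) => [->//|ndc].
by have := agree d; rewrite !inE negb_or ndc dU.
Qed.

Lemma agrees_offU1_nat U y c : c \notin U ->
  (agrees_off (c |: U) y)%:R
  = (agrees_off U y)%:R + (agrees_off U (flip y c))%:R :> R.
Proof.
move=> cU; rewrite (agrees_offU1 y cU) (agrees_offU1 (flip y c) cU).
rewrite agrees_off_flip ?setU11 // nfa_bit_flip eqxx.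
by case: agrees_off; case: (nfa_bit y c); case: (nfa_bit x c);
  rewrite /= ?add0r ?addr0.
Qed.

Lemma sum_agrees_off U : \sum_y (agrees_off U y)%:R = 2 ^+ #|U| :> R.
Proof.
move cardU : #|U| => k; elim: k U cardU => [|k IH] U cardU.
  move/eqP: cardU; rewrite cards_eq0 => /eqP ->.
  under eq_bigr => y _ do rewrite agrees_off0 eq_sym -[_%:R]mulr1.
  by rewrite sum_indicatorM.
have [c cU] : exists c, c \in U by apply/set0Pn; rewrite -card_gt0 cardU.
have cU' : c \notin U :\ c by rewrite !inE eqxx.
rewrite -(setD1K cU); under eq_bigr => y _ do rewrite agrees_offU1_nat //.
rewrite big_split /= [X in _ + X](reindex_inj (can_inj (nfa_flipK c))) /=.
under [X in _ + X]eq_bigr => y _ do rewrite nfa_flipK.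
rewrite IH //.
  by rewrite exprS mulr2n mulrDl mul1r.
by move: cardU; rewrite (cardsD1 c) cU => -[].
Qed.

Lemma refresh_ge0 U y : 0 <= refresh U y.
Proof. by rewrite /refresh divr_ge0 // exprn_ge0. Qed.

Lemma sum_refresh U : \sum_y refresh U y = 1.
Proof. by rewrite /refresh -mulr_suml sum_agrees_off divff // expf_neq0 // pnatr_eq0. Qed.

Lemma refreshT y : refresh setT y = pi_unif R y.
Proof.
have card_nfa : #|nfa|%:R = 2 ^+ #|coord| :> R.
  rewrite -[#|coord|]cardsT -sum_agrees_off -sum1_card natr_sum.
  by apply: eq_bigr => z _; rewrite agrees_offT.
by rewrite /refresh /pi_unif agrees_offT cardsT card_nfa.
Qed.

Lemma refresh_flip U y c : c \in U -> refresh U (flip y c) = refresh U y.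
Proof. by move=> cU; rewrite /refresh agrees_off_flip. Qed.

Lemma refreshU1 U y c : c \notin U ->
  refresh (c |: U) y = (refresh U y + refresh U (flip y c)) / 2.
Proof.
move=> cU; rewrite /refresh agrees_offU1_nat // cardsU1 cU exprS /=.
by rewrite -mulrDl invfM mulrA mulrAC.
Qed.

Definition missing_rate U : R := \sum_(c | c \notin U) p c.

Definition refresh_kernel U V : R :=
  (V == U)%:R * (1 - missing_rate U) + \sum_(c | c \notin U) p c * (V == c |: U)%:R.

Lemma refresh_kernel_refresh U y :
  \sum_V refresh_kernel U V * refresh V y
  = (1 - missing_rate U) * refresh U y + \sum_(c | c \notin U) p c * refresh (c |: U) y.
Proof.
under eq_bigr => V _ do rewrite mulrDl mulr_suml.
rewrite big_split /=; congr (_ + _).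
  by under eq_bigr => V _ do rewrite -mulrA; rewrite sum_indicatorM mulrC.
rewrite exchange_big /=; apply: eq_bigr => c _.
by under eq_bigr => V _ do rewrite -mulrA; rewrite -mulr_sumr sum_indicatorM.
Qed.

Lemma refresh_flip_kernel U y :
  \sum_z refresh U z * flip_kernel z y = \sum_V refresh_kernel U V * refresh V y.
Proof.
have -> : \sum_z refresh U z * flip_kernel z y
    = refresh U y * (1 - flip_rate / 2) + \sum_c p c / 2 * refresh U (flip y c).
  under eq_bigr => z _ do rewrite /flip_kernel mulrDr mulr_sumr.
  rewrite big_split /=; congr (_ + _).
    by under eq_bigr => z _ do rewrite mulrCA; rewrite sum_indicatorM.
  rewrite exchange_big /=; apply: eq_bigr => c _.
  under eq_bigr => z _ do rewrite mulrCA [refresh U z * _]mulrC.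
  by rewrite -mulr_sumr sum_indicatorM.
rewrite refresh_kernel_refresh /flip_rate /missing_rate.
have flip_in : \sum_(c | c \in U) p c / 2 * refresh U (flip y c)
    = (\sum_(c | c \in U) p c) / 2 * refresh U y.
  by rewrite !mulr_suml; apply: eq_bigr => c cU; rewrite refresh_flip.
have flip_out : \sum_(c | c \notin U) p c / 2 * refresh U (flip y c)
    = \sum_(c | c \notin U) p c * refresh (c |: U) y
      - (\sum_(c | c \notin U) p c) / 2 * refresh U y.
  rewrite !mulr_suml -sumrB; apply: eq_bigr => c cU; rewrite refreshU1 //.
  by field.
rewrite [\sum_c p c](bigID (mem U)) [\sum_c _ * _](bigID (mem U)) /=.
by rewrite flip_in flip_out; field.
Qed.

Lemma sum_refresh_kernel U : \sum_V refresh_kernel U V = 1.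
Proof.
rewrite big_split /= sum_indicatorM exchange_big /=.
under eq_bigr => c _ do rewrite -mulr_sumr sum_indicator mulr1.
by rewrite subrK.
Qed.

Lemma sum_refresh_kernel_notin U c :
  \sum_(V : {set coord} | c \notin V) refresh_kernel U V = (c \notin U)%:R * (1 - p c).
Proof.
rewrite big_split /= -big_distrl /= sum_indicator_in exchange_big /=.
under eq_bigr => i _ do rewrite -mulr_sumr sum_indicator_in !inE negb_or.
have [cU|cU] /= := boolP (c \in U).
  by rewrite mul0r add0r mul0r big1 // => i _; rewrite andbF mulr0.
under eq_bigr => i _ do rewrite andbT.
rewrite /missing_rate (bigD1 c) // [X in _ + X](bigD1 c) //= eqxx mulr0 add0r.
rewrite [X in _ + X](eq_bigr p) => [|i /andP [_ nic]]; last by rewrite eq_sym nic mulr1.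
by rewrite !mul1r opprD addrA subrK.
Qed.

(* The law after [t] steps of the set of coordinates resampled so far. *)
Fixpoint refresh_weight (t : nat) V : R :=
  if t is t'.+1 then \sum_U refresh_weight t' U * refresh_kernel U V
  else (V == set0)%:R.

Lemma sum_refresh_weight t : \sum_V refresh_weight t V = 1.
Proof.
elim: t => [|t IH] /=; first exact: sum_indicator.
rewrite exchange_big /= -[RHS]IH; apply: eq_bigr => U _.
by rewrite -mulr_sumr sum_refresh_kernel mulr1.
Qed.

Lemma sum_refresh_weight_notin t c :
  \sum_(V : {set coord} | c \notin V) refresh_weight t V = (1 - p c) ^+ t.
Proof.
elim: t => [|t IH] /=; first by rewrite sum_indicator_in inE.
rewrite exchange_big /= exprS -IH mulr_sumr [RHS]big_mkcond /=.
apply: eq_bigr => U _; rewrite -mulr_sumr sum_refresh_kernel_notin.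
by case: (c \notin U); rewrite ?mul1r ?mul0r ?mulr0 // mulrC.
Qed.

Section Nonnegative.
Hypothesis p_ge0 : forall c, 0 <= p c.
Hypothesis flip_rate_le1 : flip_rate <= 1.

Lemma refresh_kernel_ge0 U V : 0 <= refresh_kernel U V.
Proof.
have missing_le1 : missing_rate U <= 1.
  apply: le_trans flip_rate_le1; rewrite /flip_rate [leRHS](bigID (mem U)) /=.
  by rewrite lerDr sumr_ge0.
by rewrite addr_ge0 ?mulr_ge0 ?subr_ge0 ?sumr_ge0 // => c _; rewrite mulr_ge0.
Qed.

Lemma refresh_weight_ge0 t V : 0 <= refresh_weight t V.
Proof.
elim: t V => [|t IH] V /=; first exact: ler0n.
by rewrite sumr_ge0 // => U _; rewrite mulr_ge0 ?refresh_kernel_ge0.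
Qed.

Section Walk.
Variable mu : nat -> nfa -> R.
Hypothesis mu0 : forall y, mu 0 y = (x == y)%:R.
Hypothesis muS : forall t y, mu t.+1 y = \sum_z mu t z * flip_kernel z y.

Lemma walk_refresh_mixture t y : mu t y = \sum_U refresh_weight t U * refresh U y.
Proof.
elim: t y => [|t IH] y.
  by rewrite mu0 sum_indicatorM /refresh agrees_off0 cards0 expr0 divr1.
rewrite muS /=.
under eq_bigr => z _ do rewrite IH mulr_suml.
under [RHS]eq_bigr => V _ do rewrite mulr_suml.
rewrite exchange_big [RHS]exchange_big /=; apply: eq_bigr => U _.
under eq_bigr => z _ do rewrite -mulrA.
under [RHS]eq_bigr => V _ do rewrite -mulrA.
by rewrite -!mulr_sumr refresh_flip_kernel.
Qed.

Lemma tv_dist_walk_le t : tv_dist (mu t) (@pi_unif R Sigma n) <= \sum_c (1 - p c) ^+ t.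
Proof.
set w := refresh_weight t.
have pi_ge0 y : 0 <= pi_unif R y by rewrite /pi_unif divr_ge0.
have sum_pi : \sum_(y : nfa) pi_unif R y = 1.
  under eq_bigr do rewrite -refreshT.
  exact: sum_refresh.
have dev y : `|mu t y - pi_unif R y|
    <= \sum_U w U * ((U != setT)%:R * (refresh U y + pi_unif R y)).
  have -> : mu t y - pi_unif R y = \sum_U w U * (refresh U y - pi_unif R y).
    rewrite walk_refresh_mixture; under [RHS]eq_bigr do rewrite mulrBr.
    by rewrite sumrB -mulr_suml sum_refresh_weight mul1r.
  apply: le_trans (ler_norm_sum _ _ _) _; apply: ler_sum => U _.
  rewrite normrM ger0_norm ?refresh_weight_ge0 // ler_wpM2l ?refresh_weight_ge0 //.
  have [->|_] := eqVneq U setT; first by rewrite refreshT subrr normr0 mul0r.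
  by rewrite mul1r (le_trans (ler_normB _ _)) // !ger0_norm ?refresh_ge0.
have tv_le : tv_dist (mu t) (@pi_unif R Sigma n) <= \sum_U w U * (U != setT)%:R.
  rewrite /tv_dist (le_trans (ler_wpM2l _ (ler_sum _ (fun y _ => dev y)))) ?divr_ge0 //.
  rewrite exchange_big mulr_sumr /=; apply: ler_sum => U _.
  rewrite -!mulr_sumr big_split /= sum_refresh sum_pi.
  by rewrite [leLHS](_ : _ = w U * (U != setT)%:R) //; field.
apply: le_trans tv_le _.
apply: le_trans (ler_sum _ (fun U _ => ler_wpM2l (refresh_weight_ge0 t U)
  (neq_setT_le_sum_notin R U))) _.
under eq_bigr => U _ do rewrite mulr_sumr.
rewrite exchange_big /=; apply: ler_sum => c _.
rewrite -(sum_refresh_weight_notin t c) [leRHS]big_mkcond /=.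
by apply: ler_sum => U _; case: (c \notin U); rewrite ?mulr1 ?mulr0.
Qed.

End Walk.

End Nonnegative.

End RefreshCoupling.

Lemma geometric_tail_le (R : realType) (m rho e : R) (t : nat) :
  1 <= m -> 0 < rho -> rho <= 1 -> 0 < e ->
  m / rho * (ln m + ln (1 / (rho * e))) <= t%:R ->
  m * (1 - rho / m) ^+ t <= rho * e.
Proof.
move=> m_ge1 rho_gt0 rho_le1 e_gt0 t_ge.
have m_gt0 : 0 < m by apply: lt_le_trans m_ge1.
set a := rho / m; set q := 1 / (rho * e).
have a_gt0 : 0 < a by rewrite divr_gt0.
have q_gt0 : 0 < q by rewrite divr_gt0 // mulr_gt0.
have decay : (1 - a) ^+ t <= expR (- a) ^+ t.
  rewrite lerXn2r ?nnegrE ?expR_ge0 ?expR_ge1Dx //.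
  by rewrite subr_ge0 ler_pdivrMr // mul1r (le_trans rho_le1).
have at_ge : ln m + ln q <= a * t%:R.
  have : a * (m / rho * (ln m + ln q)) <= a * t%:R by rewrite ler_pM2l.
  by rewrite mulrA /a mulrA divfK ?mulfV ?gt_eqF // mul1r.
have exp_bound : expR (- a) ^+ t <= expR (- (ln m + ln q)).
  by rewrite -expRM_natl ler_expR mulrN lerN2 mulrC.
have exp_ln : expR (- (ln m + ln q)) = (m * q)^-1.
  by rewrite expRN expRD !lnK // posrE.
apply: le_trans (ler_wpM2l (ltW m_gt0) (le_trans decay exp_bound)) _.
by rewrite exp_ln invfM mulrA mulfV ?gt_eqF // mul1r /q div1r invrK.
Qed.

Lemma mixing_bound_ge0 (R : realType) (m rho eps : R) :
  1 <= m -> 0 < rho -> rho <= 1 -> 0 < eps -> eps < 1 ->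
  0 <= m / rho * (ln m + ln (1 / (rho * eps))).
Proof.
move=> m_ge1 rho_gt0 rho_le1 eps_gt0 eps_lt1.
rewrite mulr_ge0 ?divr_ge0 ?addr_ge0 ?ln_ge0 ?(ltW rho_gt0) ?(le_trans ler01) //.
rewrite div1r invf_ge1 ?mulr_gt0 //.
by apply: mulr_ile1 => //; exact: ltW.
Qed.

Section NfaChain.
Variables (R : realType) (Sigma : finType) (n : nat) (rho1 rho2 rho3 : R).
Local Notation nfa := (nfa Sigma n).
Local Notation flip := (@nfa_flip Sigma n).

Definition nfa_rate (c : nfa_coord Sigma n) : R :=
  match c with
  | inl (inl _) => rho1 / n%:R
  | inl (inr _) => rho2 / n%:R
  | inr _ => rho3 / (#|Sigma|%:R * n%:R ^+ 2)
  end.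

Lemma S_off_flip (z : nfa) c : S_off rho1 rho2 rho3 z (flip z c) = nfa_rate c.
Proof.
rewrite /S_off; case: ifP => [/existsP [q /eqP flip_q]|/existsP no_init].
  by rewrite (nfa_flip_inj (flip_q : flip z c = flip z (inl (inl q)))).
case: ifP => [/existsP [q /eqP flip_q]|/existsP no_final].
  by rewrite (nfa_flip_inj (flip_q : flip z c = flip z (inl (inr q)))).
case: ifP => [/existsP [e /eqP flip_e]|/existsP no_trans].
  by rewrite (nfa_flip_inj (flip_e : flip z c = flip z (inr e))).
case: c no_init no_final no_trans => [[q|q]|e] no_init no_final no_trans.
- by case: no_init; exists q.
- by case: no_final; exists q.
- by case: no_trans; exists e.
Qed.

Lemma S_off_nfa_rate (z y : nfa) :
  S_off rho1 rho2 rho3 z y = \sum_c nfa_rate c * (y == flip z c)%:R.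
Proof.
case: (pickP (fun c => y == flip z c)) => [c /eqP -> | not_flip].
  rewrite S_off_flip (bigD1 c) //= eqxx mulr1 big1 ?addr0 // => d ndc.
  by rewrite (inj_eq (@nfa_flip_inj _ _ z)) eq_sym (negbTE ndc) mulr0.
rewrite big1 => [|c _]; last by rewrite not_flip mulr0.
rewrite /S_off; case: ifP => [/existsP [q /eqP flip_q]|_].
  by have := not_flip (inl (inl q)); rewrite /= flip_q eqxx.
case: ifP => [/existsP [q /eqP flip_q]|_].
  by have := not_flip (inl (inr q)); rewrite /= flip_q eqxx.
case: ifP => [/existsP [e /eqP flip_e]|//].
by have := not_flip (inr e); rewrite /= flip_e eqxx.
Qed.

Lemma L_mat_flip_kernel (z y : nfa) :
  L_mat rho1 rho2 rho3 z y = flip_kernel nfa_rate z y.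
Proof.
have sum_S_off : \sum_(w | w != z) S_off rho1 rho2 rho3 z w = flip_rate nfa_rate.
  under eq_bigr do rewrite S_off_nfa_rate.
  rewrite exchange_big; apply: eq_bigr => c _.
  by rewrite -mulr_sumr sum_indicator_in nfa_flip_neq mulr1.
rewrite /L_mat /S_mat sum_S_off /flip_kernel; case: eqP => [<-|_].
  rewrite big1 ?addr0 => [|c _]; last by rewrite eq_sym (negbTE (nfa_flip_neq _ _)) mulr0.
  by rewrite eqxx /= mul1r; field.
rewrite mul0r add0r S_off_nfa_rate mulr_sumr; apply: eq_bigr => c _.
by rewrite eq_nfa_flip_sym; field.
Qed.

Lemma sum_nfa_rate_pow (t : nat) :
  \sum_c (1 - nfa_rate c) ^+ t
  = n%:R * (1 - rho1 / n%:R) ^+ t + n%:R * (1 - rho2 / n%:R) ^+ t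
    + (#|Sigma|%:R * n%:R ^+ 2) * (1 - rho3 / (#|Sigma|%:R * n%:R ^+ 2)) ^+ t.
Proof. exact: sum_nfa_coord. Qed.

Lemma mixing_cond_of_bounds (eps : R) (t : nat) :
  (0 < n)%N -> (0 < #|Sigma|)%N ->
  0 < rho1 -> 0 < rho2 -> 0 < rho3 -> rho1 + rho2 + rho3 <= 1 -> 0 < eps ->
  n%:R / rho1 * (ln (n%:R : R) + ln (1 / (rho1 * eps))) <= t%:R ->
  n%:R / rho2 * (ln (n%:R : R) + ln (1 / (rho2 * eps))) <= t%:R ->
  (#|Sigma|%:R * n%:R ^+ 2) / rho3 *
    (ln (#|Sigma|%:R * n%:R ^+ 2 : R) + ln (1 / (rho3 * eps))) <= t%:R ->
  mixing_cond Sigma n rho1 rho2 rho3 eps t.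
Proof.
move=> n_gt0 Sigma_gt0 rho1_gt0 rho2_gt0 rho3_gt0 rho_le1 eps_gt0 b1_le b2_le b3_le.
have n_ge1 : (1 : R) <= n%:R by rewrite ler1n.
have m_ge1 : (1 : R) <= #|Sigma|%:R * n%:R ^+ 2.
  by rewrite -[leLHS]mulr1 ler_pM ?exprn_ege1 ?ler1n.
have [rho1_le1 rho2_le1 rho3_le1] : [/\ rho1 <= 1, rho2 <= 1 & rho3 <= 1].
  by split; lra.
have rate_ge0 c : 0 <= nfa_rate c.
  by case: c => [[q|q]|e]; apply: divr_ge0; rewrite ?ler0n ?(le_trans ler01 m_ge1) ?ltW.
have rate_sum : flip_rate nfa_rate = rho1 + rho2 + rho3.
  rewrite /flip_rate (@sum_nfa_coord Sigma n R _ (rho1 / n%:R) (rho2 / n%:R)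
    (rho3 / (#|Sigma|%:R * n%:R ^+ 2))) //.
  by field; rewrite !pnatr_eq0 -!lt0n n_gt0.
have rate_le1 : flip_rate nfa_rate <= 1 by rewrite rate_sum.
rewrite /mixing_cond; apply: bigmax_le => [|x _]; first exact: ltW.
have L_pow_step s y : L_pow rho1 rho2 rho3 s.+1 x y
    = \sum_z L_pow rho1 rho2 rho3 s x z * flip_kernel nfa_rate z y.
  by apply: eq_bigr => z _; rewrite L_mat_flip_kernel.
apply: le_trans (tv_dist_walk_le rate_ge0 rate_le1 (fun=> erefl) L_pow_step t) _.
rewrite sum_nfa_rate_pow.
apply: le_trans (lerD (lerD (geometric_tail_le n_ge1 rho1_gt0 rho1_le1 eps_gt0 b1_le)
  (geometric_tail_le n_ge1 rho2_gt0 rho2_le1 eps_gt0 b2_le))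
  (geometric_tail_le m_ge1 rho3_gt0 rho3_le1 eps_gt0 b3_le)) _.
by rewrite -!mulrDl ler_piMl // ltW.
Qed.

End NfaChain.

Theorem proposition2 (R : realType) (Sigma : finType) (n : nat)
  (rho1 rho2 rho3 eps : R) :
  (1 < #|Sigma|)%N -> (1 <= n)%N ->
  0 < rho1 -> 0 < rho2 -> 0 < rho3 -> rho1 + rho2 + rho3 <= 1 ->
  0 < eps -> eps < 1 ->
  exists H : (exists t, mixing_cond Sigma n rho1 rho2 rho3 eps t),
    ((ex_minn H)%:Z <=
      Num.max (Num.max
        (Num.ceil (n%:R / rho1 * (ln (n%:R : R) + ln (1 / (rho1 * eps)))))
        (Num.ceil (n%:R / rho2 * (ln (n%:R : R) + ln (1 / (rho2 * eps))))))
        (Num.ceil ((#|Sigma|%:R * n%:R ^+ 2) / rho3 *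
            (ln (#|Sigma|%:R * n%:R ^+ 2 : R) + ln (1 / (rho3 * eps))))))%R.
Proof.
move=> Sigma_gt1 n_gt0 rho1_gt0 rho2_gt0 rho3_gt0 rho_le1 eps_gt0 eps_lt1.
set b1 := n%:R / rho1 * _; set b2 := n%:R / rho2 * _.
set b3 := _ / rho3 * _; set M := Num.max _ _.
have [c1 c2 c3] : [/\ Num.ceil b1 <= M, Num.ceil b2 <= M & Num.ceil b3 <= M].
  by rewrite /M !le_max !lexx !orbT.
have M_ge0 : 0 <= M.
  apply: le_trans c1; rewrite -(ceil0 R) ceil_le //.
  by apply: mixing_bound_ge0; rewrite ?ler1n //; lra.
have b_le (b : R) : Num.ceil b <= M -> b <= `|M|%N%:R.
  move=> cb; rewrite (le_trans (ceil_ge b)) // natr_absz ler_int.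
  exact: le_trans cb (ler_norm M).
have mix := mixing_cond_of_bounds n_gt0 (ltnW Sigma_gt1) rho1_gt0 rho2_gt0 rho3_gt0
  rho_le1 eps_gt0 (b_le _ c1) (b_le _ c2) (b_le _ c3).
exists (ex_intro (mixing_cond Sigma n rho1 rho2 rho3 eps) _ mix).
case: ex_minnP => t _ t_min.
by rewrite -(gez0_abs M_ge0) lez_nat t_min.
Qed.
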